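(* Let $F:\mathbb{R}^{n_x}\times\mathbb{R}^{n_z}\to\mathbb{R}$ be convex and continuously differentiable, $X\subset\mathbb{R}^{n_x}$ convex and compact, $Z\subseteq\mathbb{R}^{n_z}$ closed and convex, and suppose that for each $x\in X$ the map $z\mapsto F(x,z)$ is inf-compact on $Z$. Fix $\beta,\sigma\in(0,1)$. Let $\{(x^k,z^k,d^k)\}_{k\ge0}$ with $x^k\in X$, $z^k\in Z$ satisfy the Direction Assumption, the Gradient Related Assumption and the Sufficient Decrease Assumption. Then $\{(x^k,z^k)\}$ has limit points, and every limit point $(\bar x,\bar z)$ satisfies $F'_x(\bar x,\bar z;d)\ge0$ for all $d\in X-\{\bar x\}$.
   Context: $F'_x(x,z;d)=\lim_{\alpha\downarrow0}\frac{F(x+\alpha d,z)-F(x,z)}{\alpha}$ denotes the directional derivative in $x$. A function $g$ is inf-compact on $Z$ if $\{z\in Z: g(z)\le\ell\}$ is compact for every $\ell\in\mathbb{R}$. $X-\{x\}=\{y-x: y\in X\}$. Direction Assumption (DA): for each $k\ge0$, $x^k+d^k\in X$ and $F'_x(x^k,z^k;d^k)<0$. Gradient Related Assumption (GRA): whenever a subsequence $\{(x^k,z^k)\}_{k\in\mathcal{K}}$ converges to some $(\bar x,\bar z)$ and there exists $\bar d\in X-\{\bar x\}$ with $F'_x(\bar x,\bar z;\bar d)<0$, then $\limsup_{k\to\infty,k\in\mathcal{K}}F'_x(x^k,z^k;d^k)<0$. Armijo step: $\alpha^k$ is the largest element of $\{1,\beta,\beta^2,\dots\}$ such that $F(x^k+\alpha^k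 d^k,z^k)-F(x^k,z^k)\le\alpha^k\sigma F'_x(x^k,z^k;d^k)$. Sufficient Decrease Assumption (SDA): $F(x^{k+1},z^{k+1})\le F(x^k+\alpha^kd^k,z^k)$ for all $k\ge0$. *)

From Stdlib Require Import Reals Lra List ClassicalEpsilon.
From Stdlib Require Vectors.Fin.
Open Scope R_scope.

Definition vec (n : nat) := Fin.t n -> R.

Fixpoint vsum (n : nat) : (Fin.t n -> R) -> R :=
  match n return (Fin.t n -> R) -> R with
  | O => fun _ => 0
  | S m => fun f => f Fin.F1 + vsum m (fun i => f (Fin.FS i))
  end.

Definition vadd {n} (u v : vec n) : vec n := fun i => u i + v i.
Definition vsub {n} (u v : vec n) : vec n := fun i => u i - v i.
Definition vscal {n} (a : R) (u : vec n) : vec n := fun i => a * u i.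
Definition vdot {n} (u v : vec n) : R := vsum n (fun i => u i * v i).
Definition vnorm {n} (u : vec n) : R := sqrt (vdot u u).
Definition pnorm {nx nz} (u : vec nx) (w : vec nz) : R :=
  sqrt (vdot u u + vdot w w).

Definition is_open {n} (U : vec n -> Prop) : Prop :=
  forall p, U p -> exists r, 0 < r /\ forall q, vnorm (vsub q p) < r -> U q.
Definition is_closed {n} (S : vec n -> Prop) : Prop :=
  is_open (fun p => ~ S p).
Definition is_compact {n} (S : vec n -> Prop) : Prop :=
  forall (I : Type) (U : I -> vec n -> Prop),
    (forall i, is_open (U i)) ->
    (forall p, S p -> exists i, U i p) ->
    exists l : list I, forall p, S p -> exists i, In i l /\ U i p.
Definition is_convex_set {n} (S : vec n -> Prop) : Prop :=
  forall p q t, S p -> S q -> 0 <= t <= 1 ->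
    S (vadd (vscal t p) (vscal (1 - t) q)).

Definition convex_fun {nx nz} (F : vec nx -> vec nz -> R) : Prop :=
  forall x1 z1 x2 z2 t, 0 <= t <= 1 ->
    F (vadd (vscal t x1) (vscal (1 - t) x2)) (vadd (vscal t z1) (vscal (1 - t) z2))
    <= t * F x1 z1 + (1 - t) * F x2 z2.

Definition cont_diff {nx nz} (F : vec nx -> vec nz -> R) : Prop :=
  exists (gx : vec nx -> vec nz -> vec nx) (gz : vec nx -> vec nz -> vec nz),
    (forall x z eps, 0 < eps -> exists delta, 0 < delta /\
       forall hx hz, pnorm hx hz < delta ->
         Rabs (F (vadd x hx) (vadd z hz) - F x z - vdot (gx x z) hx - vdot (gz x z) hz)
           <= eps * pnorm hx hz) /\
    (forall x z eps, 0 < eps -> exists delta, 0 < delta /\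
       forall x' z', pnorm (vsub x' x) (vsub z' z) < delta ->
         vnorm (vsub (gx x' z') (gx x z)) < eps /\
         vnorm (vsub (gz x' z') (gz x z)) < eps).

Definition inf_compact {n} (g : vec n -> R) (Z : vec n -> Prop) : Prop :=
  forall l : R, is_compact (fun z => Z z /\ g z <= l).

Definition is_dirderiv {nx nz} (F : vec nx -> vec nz -> R) x z (d : vec nx) (l : R)
  : Prop :=
  forall eps, 0 < eps -> exists delta, 0 < delta /\
    forall a, 0 < a < delta ->
      Rabs ((F (vadd x (vscal a d)) z - F x z) / a - l) < eps.

(* F'_x(x,z;d): the limit (which is unique when it exists) *)
Definition dirderiv {nx nz} (F : vec nx -> vec nz -> R) x z (d : vec nx) : R :=
  epsilon (inhabits 0) (fun l => is_dirderiv F x z d l).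

(* Armijo step: a is the largest element of {1, beta, beta^2, ...}
   satisfying the Armijo condition *)
Definition armijo_cond {nx nz} (F : vec nx -> vec nz -> R) (sigma : R) x z d (a : R)
  : Prop :=
  F (vadd x (vscal a d)) z - F x z <= a * sigma * dirderiv F x z d.
Definition armijo_step {nx nz} (F : vec nx -> vec nz -> R) (beta sigma : R) x z d
  (a : R) : Prop :=
  exists m : nat, a = beta ^ m /\ armijo_cond F sigma x z d a /\
    forall m', (m' < m)%nat -> ~ armijo_cond F sigma x z d (beta ^ m').

Definition strict_incr (phi : nat -> nat) : Prop := forall j, (phi j < phi (S j))%nat.
Definition pconverges {nx nz} (x : nat -> vec nx) (z : nat -> vec nz) xb zb : Prop :=
  forall eps, 0 < eps -> exists N, forall j, (N <= j)%nat ->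
    pnorm (vsub (x j) xb) (vsub (z j) zb) < eps.
Definition is_limit_point {nx nz} (x : nat -> vec nx) (z : nat -> vec nz) xb zb : Prop :=
  exists phi, strict_incr phi /\
    pconverges (fun j => x (phi j)) (fun j => z (phi j)) xb zb.

Definition DA {nx nz} (F : vec nx -> vec nz -> R) (X : vec nx -> Prop)
  (x : nat -> vec nx) (z : nat -> vec nz) (d : nat -> vec nx) : Prop :=
  forall k, X (vadd (x k) (d k)) /\ dirderiv F (x k) (z k) (d k) < 0.

Definition limsup_neg (u : nat -> R) : Prop :=
  exists c, c < 0 /\ exists N, forall j, (N <= j)%nat -> u j <= c.

Definition GRA {nx nz} (F : vec nx -> vec nz -> R) (X : vec nx -> Prop)
  (x : nat -> vec nx) (z : nat -> vec nz) (d : nat -> vec nx) : Prop :=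
  forall phi xb zb, strict_incr phi ->
    pconverges (fun j => x (phi j)) (fun j => z (phi j)) xb zb ->
    (exists db, X (vadd xb db) /\ dirderiv F xb zb db < 0) ->
    limsup_neg (fun j => dirderiv F (x (phi j)) (z (phi j)) (d (phi j))).

Definition SDA {nx nz} (F : vec nx -> vec nz -> R)
  (x : nat -> vec nx) (z : nat -> vec nz) (d : nat -> vec nx) (alpha : nat -> R) : Prop :=
  forall k, F (x (S k)) (z (S k)) <= F (vadd (x k) (vscal (alpha k) (d k))) (z k).

(* The Armijo rule and SDA make k |-> F(x^k, z^k) nonincreasing.  A cluster point xb of
   (x^k) exists by compactness of X.  For (z^k), convexity bounds F(xb, (z^k + z^0)/2) by
   the average of F(x^k, z^k) and F(2 xb - x^k, z^0), so these midpoints stay in a sublevel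
   set of F(xb, .), which is compact by inf-compactness.
   If a limit point admitted a descent direction, GRA would keep F'_x(x^k, z^k; d^k) <= c < 0
   along the subsequence; since F(x^k, z^k) is bounded below by its limit, the steps alpha^k
   must then tend to 0.  So the Armijo test fails at alpha^k / beta, and by convexity this
   failure means sigma grad F(x^k) . d^k < grad F(x^k + (alpha^k / beta) d^k) . d^k.  Continuity
   of the gradient and boundedness of d^k make both slopes agree in the limit, which is
   impossible as sigma < 1 and the slopes stay below c < 0. *)

From Stdlib Require Import Reals Lra Lia List ClassicalEpsilon Classical FunctionalExtensionality.
Open Scope R_scope.

Ltac vext := apply functional_extensionality; intro; unfold vadd, vsub, vscal; field.

Lemma vsum_ext n (f g : Fin.t n -> R) : (forall i, f i = g i) -> vsum n f = vsum n g.
Proof.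
revert f g; induction n as [|n IH]; intros f g H; simpl; auto.
rewrite H, (IH _ (fun i => g (Fin.FS i))); auto.
Qed.

Lemma vsum_plus n (f g : Fin.t n -> R) : vsum n (fun i => f i + g i) = vsum n f + vsum n g.
Proof.
revert f g; induction n as [|n IH]; intros f g; simpl; [ring|].
rewrite (IH (fun i => f (Fin.FS i)) (fun i => g (Fin.FS i))); ring.
Qed.

Lemma vsum_scal n a (f : Fin.t n -> R) : vsum n (fun i => a * f i) = a * vsum n f.
Proof.
revert f; induction n as [|n IH]; intros f; simpl; [ring|].
rewrite (IH (fun i => f (Fin.FS i))); ring.
Qed.

Lemma vsum_nonneg n (f : Fin.t n -> R) : (forall i, 0 <= f i) -> 0 <= vsum n f.
Proof.
revert f; induction n as [|n IH]; intros f H; simpl; [lra|].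
pose proof (IH (fun i => f (Fin.FS i)) (fun i => H (Fin.FS i))). pose proof (H Fin.F1). lra.
Qed.

Lemma quadratic_nonneg_discriminant a b c :
  0 <= c -> (forall t, 0 <= a - 2 * b * t + c * (t * t)) -> b * b <= a * c.
Proof.
intros Hc H. destruct (Req_dec c 0) as [->|Hc0].
- destruct (Req_dec b 0) as [->|Hb0]; [lra|].
  specialize (H ((a + 1) / (2 * b))).
  replace (a - 2 * b * ((a + 1) / (2 * b)) + 0 * ((a + 1) / (2 * b) * ((a + 1) / (2 * b))))
    with (-1) in H by (field; auto). lra.
- specialize (H (b / c)).
  replace (a - 2 * b * (b / c) + c * (b / c * (b / c))) with ((a * c - b * b) / c) in H
    by (field; auto).
  apply Rmult_le_compat_r with (r := c) in H; [|lra].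
  replace ((a * c - b * b) / c * c) with (a * c - b * b) in H by (field; auto). lra.
Qed.

Section Euclidean.
Context {n : nat}.

Lemma vdot_comm (u v : vec n) : vdot u v = vdot v u.
Proof. unfold vdot; apply vsum_ext; intro; ring. Qed.

Lemma vdot_nonneg (u : vec n) : 0 <= vdot u u.
Proof. unfold vdot; apply vsum_nonneg; intro; apply Rle_0_sqr. Qed.

Lemma vdot_addl (u v w : vec n) : vdot (vadd u v) w = vdot u w + vdot v w.
Proof. unfold vdot, vadd; rewrite <- vsum_plus; apply vsum_ext; intro; ring. Qed.

Lemma vdot_scall a (u w : vec n) : vdot (vscal a u) w = a * vdot u w.
Proof. unfold vdot, vscal; rewrite <- vsum_scal; apply vsum_ext; intro; ring. Qed.

Lemma vdot_subl (u v w : vec n) : vdot (vsub u v) w = vdot u w - vdot v w.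
Proof.
replace (vsub u v) with (vadd u (vscal (-1) v)) by vext.
rewrite vdot_addl, vdot_scall; ring.
Qed.

Lemma vdot_addr (u v w : vec n) : vdot w (vadd u v) = vdot w u + vdot w v.
Proof. rewrite !(vdot_comm w); apply vdot_addl. Qed.

Lemma vdot_scalr a (u w : vec n) : vdot w (vscal a u) = a * vdot w u.
Proof. rewrite !(vdot_comm w); apply vdot_scall. Qed.

Lemma vdot_zero (w : vec n) : vdot w (fun _ => 0) = 0.
Proof.
replace (fun _ : Fin.t n => 0) with (vscal 0 w) by vext.
rewrite vdot_scalr; ring.
Qed.

Lemma cauchy_schwarz (u v : vec n) : vdot u v * vdot u v <= vdot u u * vdot v v.
Proof.
apply quadratic_nonneg_discriminant; [apply vdot_nonneg|]. intro t.
replace (vdot u u - 2 * vdot u v * t + vdot v v * (t * t))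
  with (vdot (vadd u (vscal (- t) v)) (vadd u (vscal (- t) v))).
- apply vdot_nonneg.
- rewrite !vdot_addl, !vdot_addr, !vdot_scall, !vdot_scalr, (vdot_comm v u); ring.
Qed.

Lemma vnorm_nonneg (u : vec n) : 0 <= vnorm u.
Proof. apply sqrt_pos. Qed.

Lemma vnorm_sq (u : vec n) : vnorm u * vnorm u = vdot u u.
Proof. apply sqrt_sqrt, vdot_nonneg. Qed.

Lemma vdot_abs_le (u v : vec n) : Rabs (vdot u v) <= vnorm u * vnorm v.
Proof.
rewrite <- (sqrt_square (Rabs (vdot u v))) by apply Rabs_pos.
unfold vnorm; rewrite <- sqrt_mult_alt by apply vdot_nonneg.
apply sqrt_le_1_alt. rewrite <- Rabs_mult, Rabs_right by apply Rle_ge, Rle_0_sqr.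
apply cauchy_schwarz.
Qed.

Lemma vdot_le (u v : vec n) : vdot u v <= vnorm u * vnorm v.
Proof. pose proof (vdot_abs_le u v); pose proof (Rle_abs (vdot u v)); lra. Qed.

Lemma vnorm_add (u v : vec n) : vnorm (vadd u v) <= vnorm u + vnorm v.
Proof.
pose proof (vnorm_nonneg u); pose proof (vnorm_nonneg v).
rewrite <- (sqrt_square (vnorm u + vnorm v)) by lra.
apply sqrt_le_1_alt.
rewrite vdot_addl, !vdot_addr, (vdot_comm v u), <- (vnorm_sq u), <- (vnorm_sq v).
pose proof (vdot_le u v). nra.
Qed.

Lemma vnorm_scal a (u : vec n) : vnorm (vscal a u) = Rabs a * vnorm u.
Proof.
unfold vnorm. rewrite vdot_scall, vdot_scalr, <- Rmult_assoc, sqrt_mult_alt by apply Rle_0_sqr.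
now rewrite <- sqrt_Rsqr_abs.
Qed.

Lemma vnorm_sub_le (u v : vec n) : vnorm (vsub u v) <= vnorm u + vnorm v.
Proof.
replace (vsub u v) with (vadd u (vscal (-1) v)) by vext.
eapply Rle_trans; [apply vnorm_add|].
rewrite vnorm_scal, (Rabs_left (-1)) by lra; lra.
Qed.

Lemma vnorm_sub_sym (u v : vec n) : vnorm (vsub u v) = vnorm (vsub v u).
Proof.
replace (vsub v u) with (vscal (-1) (vsub u v)) by vext.
rewrite vnorm_scal, (Rabs_left (-1)) by lra; ring.
Qed.

Lemma vnorm_sub_triang (a b c : vec n) :
  vnorm (vsub a c) <= vnorm (vsub a b) + vnorm (vsub b c).
Proof. replace (vsub a c) with (vadd (vsub a b) (vsub b c)) by vext; apply vnorm_add. Qed.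

Lemma vnorm_zero : vnorm (fun _ : Fin.t n => 0) = 0.
Proof. unfold vnorm; rewrite vdot_zero; apply sqrt_0. Qed.

Lemma vnorm_subxx (u : vec n) : vnorm (vsub u u) = 0.
Proof. replace (vsub u u) with (fun _ : Fin.t n => 0) by vext; apply vnorm_zero. Qed.

End Euclidean.

Lemma pnorm_ge_l {nx nz} (a : vec nx) (b : vec nz) : vnorm a <= pnorm a b.
Proof. apply sqrt_le_1_alt; pose proof (vdot_nonneg b); lra. Qed.

Lemma pnorm_ge_r {nx nz} (a : vec nx) (b : vec nz) : vnorm b <= pnorm a b.
Proof. apply sqrt_le_1_alt; pose proof (vdot_nonneg a); lra. Qed.

Lemma pnorm_le_add {nx nz} (a : vec nx) (b : vec nz) : pnorm a b <= vnorm a + vnorm b.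
Proof.
pose proof (vnorm_nonneg a); pose proof (vnorm_nonneg b).
rewrite <- (sqrt_square (vnorm a + vnorm b)) by lra.
apply sqrt_le_1_alt. rewrite <- (vnorm_sq a), <- (vnorm_sq b). nra.
Qed.
Definition vconverges {n} (u : nat -> vec n) (p : vec n) : Prop :=
  forall eps, 0 < eps -> exists N, forall j, (N <= j)%nat -> vnorm (vsub (u j) p) < eps.

Lemma pconverges_iff {nx nz} (x : nat -> vec nx) (z : nat -> vec nz) xb zb :
  pconverges x z xb zb <-> vconverges x xb /\ vconverges z zb.
Proof.
split.
- intros H; split; intros eps Heps; destruct (H eps Heps) as [N HN]; exists N; intros j Hj;
    specialize (HN j Hj);
    [pose proof (pnorm_ge_l (vsub (x j) xb) (vsub (z j) zb))
    |pose proof (pnorm_ge_r (vsub (x j) xb) (vsub (z j) zb))]; lra.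
- intros [Hx Hz] eps Heps.
  destruct (Hx (eps / 2)) as [N1 HN1]; [lra|]. destruct (Hz (eps / 2)) as [N2 HN2]; [lra|].
  exists (Nat.max N1 N2); intros j Hj.
  pose proof (pnorm_le_add (vsub (x j) xb) (vsub (z j) zb)).
  specialize (HN1 j ltac:(lia)); specialize (HN2 j ltac:(lia)). lra.
Qed.

Lemma strict_incr_ge phi : strict_incr phi -> forall j, (j <= phi j)%nat.
Proof. intros H j; induction j; [lia|]; specialize (H j); lia. Qed.

Lemma strict_incr_mono phi : strict_incr phi -> forall j j', (j <= j')%nat -> (phi j <= phi j')%nat.
Proof. intros H j j' Hj; induction Hj; [lia|]; specialize (H m); lia. Qed.

Lemma strict_incr_comp phi psi :
  strict_incr phi -> strict_incr psi -> strict_incr (fun j => phi (psi j)).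
Proof.
intros Hphi Hpsi j. specialize (Hpsi j).
pose proof (strict_incr_mono phi Hphi (S (psi j)) (psi (S j)) Hpsi). specialize (Hphi (psi j)). lia.
Qed.

Lemma vconverges_subseq {n} (u : nat -> vec n) p psi :
  strict_incr psi -> vconverges u p -> vconverges (fun j => u (psi j)) p.
Proof.
intros Hpsi Hu eps Heps. destruct (Hu eps Heps) as [N HN]. exists N; intros j Hj.
apply HN. pose proof (strict_incr_ge psi Hpsi j). lia.
Qed.

Lemma vconverges_affine {n} (u : nat -> vec n) p a w :
  vconverges u p -> vconverges (fun j => vadd (vscal a (u j)) w) (vadd (vscal a p) w).
Proof.
intros Hu eps Heps. pose proof (Rabs_pos a).
destruct (Hu (eps / (Rabs a + 1))) as [N HN]; [apply Rdiv_lt_0_compat; lra|].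
exists N; intros j Hj. specialize (HN j Hj).
replace (vsub (vadd (vscal a (u j)) w) (vadd (vscal a p) w)) with (vscal a (vsub (u j) p)) by vext.
rewrite vnorm_scal. pose proof (vnorm_nonneg (vsub (u j) p)).
replace eps with ((Rabs a + 1) * (eps / (Rabs a + 1))) by (field; lra). nra.
Qed.

Lemma decreasing_ge_subseq_limit (f : nat -> R) phi L :
  Un_decreasing f -> strict_incr phi -> Un_cv (fun j => f (phi j)) L -> forall k, L <= f k.
Proof.
intros Hdec Hphi Hcv k. apply Rnot_lt_le; intro Hlt.
destruct (Hcv (L - f k)) as [N HN]; [lra|].
specialize (HN (Nat.max N k) (Nat.le_max_l N k)). unfold Rdist in HN.
pose proof (strict_incr_ge phi Hphi (Nat.max N k)).
pose proof (decreasing_prop f k (phi (Nat.max N k)) Hdec ltac:(lia)).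
pose proof (Rle_abs (L - f (phi (Nat.max N k)))). rewrite Rabs_minus_sym in HN. lra.
Qed.

Lemma armijo_steps_vanish (f a D : nat -> R) s c phi L :
  0 < s -> c < 0 -> strict_incr phi -> (forall k, 0 < a k) -> Un_decreasing f ->
  (forall k, f (S k) <= f k + a k * s * D k) ->
  (exists N, forall j, (N <= j)%nat -> D (phi j) <= c) ->
  Un_cv (fun j => f (phi j)) L -> Un_cv (fun j => a (phi j)) 0.
Proof.
intros Hs Hc Hphi Ha Hdec Hstep [N1 HD] Hcv eps Heps.
assert (Hsc : 0 < s * - c) by nra.
destruct (Hcv (eps * (s * - c))) as [N2 HN2]; [nra|].
exists (Nat.max N1 N2); intros j Hj.
specialize (HD j ltac:(lia)); specialize (HN2 j ltac:(lia)). unfold Rdist in *.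
set (k := phi j) in *.
pose proof (decreasing_ge_subseq_limit f phi L Hdec Hphi Hcv (S k)).
pose proof (Hstep k). pose proof (Ha k).
assert (a k * s * D k <= a k * s * c) by (apply Rmult_le_compat_l; nra).
pose proof (Rle_abs (f k - L)).
rewrite Rminus_0_r, Rabs_right by lra.
apply Rmult_lt_reg_r with (s * - c); lra.
Qed.

Lemma ball_open {n} (p : vec n) r : is_open (fun q => vnorm (vsub q p) < r).
Proof.
intros q Hq. exists (r - vnorm (vsub q p)); split; [lra|].
intros q' H. pose proof (vnorm_sub_triang q' q p). lra.
Qed.

Lemma compact_bounded {n} (C : vec n -> Prop) :
  is_compact C -> exists B, 0 <= B /\ forall p, C p -> vnorm p <= B.
Proof.
intros HC. destruct (HC nat (fun k q => vnorm q < INR k)) as [l Hl].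
- intros k q Hq. exists (INR k - vnorm q); split; [lra|]. intros q' H.
  replace q' with (vadd (vsub q' q) q) by vext. pose proof (vnorm_add (vsub q' q) q). lra.
- intros p _. destruct (INR_unbounded (vnorm p)) as [k Hk]. exists k; lra.
- exists (INR (fold_right Nat.max 0%nat l)). split; [apply pos_INR|].
  intros p Hp. destruct (Hl p Hp) as [i [Hi Hu]].
  assert (i <= fold_right Nat.max 0 l)%nat.
  { clear -Hi. induction l as [|a l IH]; simpl in *; [contradiction|].
    destruct Hi as [->|Hi]; [lia|]. specialize (IH Hi); lia. }
  apply le_INR in H. lra.
Qed.

(* Otherwise every point of C has a ball avoiding a tail of u; a finite subcover then
   contains u at an index beyond all these tails. *)
Lemma compact_cluster_point {n} (C : vec n -> Prop) (u : nat -> vec n) N :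
  is_compact C -> (forall j, (N <= j)%nat -> C (u j)) ->
  exists p, C p /\ forall r, 0 < r -> forall M, exists j, (M <= j)%nat /\ vnorm (vsub (u j) p) < r.
Proof.
intros HC Hu. apply NNPP; intros Hno.
set (P := fun t : vec n * R * nat => let '(p, r, M) := t in
   C p /\ 0 < r /\ forall j, (M <= j)%nat -> r <= vnorm (vsub (u j) p)).
destruct (HC {t | P t} (fun i q => let '(p, r, M) := proj1_sig i in vnorm (vsub q p) < r))
  as [l Hl].
- intros [[[p r] M] Hi]; apply ball_open.
- intros p Hp. apply NNPP; intro Hnot. apply Hno. exists p; split; auto.
  intros r Hr M. apply NNPP; intro Hj. apply Hnot.
  assert (Hpr : P (p, r, M)).
  { repeat split; auto. intros j HMj. apply Rnot_lt_le; intro. apply Hj. exists j; auto. }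
  exists (exist _ _ Hpr). simpl. rewrite vnorm_subxx. auto.
- set (Mx := fold_right (fun (i : {t | P t}) acc => let '(p, r, M) := proj1_sig i in
                                                    Nat.max M acc) N l).
  assert (HN : (N <= Mx)%nat).
  { unfold Mx; clear; induction l as [|[[[p r] M] ?] l IH]; simpl; lia. }
  assert (HM : forall i, In i l -> let '(p, r, M) := proj1_sig i in (M <= Mx)%nat).
  { unfold Mx; clear; induction l as [|[[[p r] M] Hi] l IH]; simpl; intros i Hin; [contradiction|].
    destruct Hin as [<-|Hin]; [simpl; lia|].
    specialize (IH i Hin). destruct (proj1_sig i) as [[? ?] ?]. lia. }
  destruct (Hl (u Mx) (Hu Mx HN)) as [i [Hin Hi]]. specialize (HM i Hin). clear Hin.
  destruct i as [t HP]. destruct t as [[p r] M]. simpl in *. destruct HP as [_ [_ HP]].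
  specialize (HP Mx HM). lra.
Qed.

Lemma compact_subseq_converges {n} (C : vec n -> Prop) (u : nat -> vec n) N :
  is_compact C -> (forall j, (N <= j)%nat -> C (u j)) ->
  exists p psi, C p /\ strict_incr psi /\ vconverges (fun j => u (psi j)) p.
Proof.
intros HC Hu. destruct (compact_cluster_point C u N HC Hu) as [p [Hp Hc]].
assert (H : forall M k : nat, exists j, (M <= j)%nat /\ vnorm (vsub (u j) p) < / (INR k + 1)).
{ intros M k. apply Hc. apply Rinv_0_lt_compat. pose proof (pos_INR k); lra. }
set (next := fun M k => proj1_sig (constructive_indefinite_description _ (H M k))).
assert (Hnext : forall M k, (M <= next M k)%nat /\ vnorm (vsub (u (next M k)) p) < / (INR k + 1)).
{ intros M k. unfold next. destruct (constructive_indefinite_description _ (H M k)); auto. }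
set (psi := fix f (j : nat) : nat :=
  match j with O => next 0%nat 0%nat | S j' => next (S (f j')) (S j') end).
exists p, psi. repeat split; auto.
- intro j. simpl. destruct (Hnext (S (psi j)) (S j)). lia.
- intros eps He. destruct (archimed_cor1 eps He) as [K [HK HK0]]. exists K. intros j Hj.
  assert (vnorm (vsub (u (psi j)) p) < / (INR j + 1)) by (destruct j; apply Hnext).
  assert (/ (INR j + 1) <= / INR K).
  { apply Rinv_le_contravar; [apply lt_0_INR; lia|]. apply le_INR in Hj. lra. }
  lra.
Qed.

Lemma direction_bounded {nx} (X : vec nx -> Prop) (x d : nat -> vec nx) :
  is_compact X -> (forall k, X (x k)) -> (forall k, X (vadd (x k) (d k))) ->
  exists B, 0 <= B /\ forall k, vnorm (d k) <= B.
Proof.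
intros HX Hx Hxd. destruct (compact_bounded X HX) as [B [HB0 HB]].
exists (2 * B); split; [lra|]. intro k.
replace (d k) with (vsub (vadd (x k) (d k)) (x k)) by vext.
pose proof (vnorm_sub_le (vadd (x k) (d k)) (x k)).
pose proof (HB _ (Hxd k)); pose proof (HB _ (Hx k)). lra.
Qed.
Lemma Rabs_div_lt A a e : 0 < a -> Rabs A < e * a -> Rabs (A / a) < e.
Proof.
intros Ha H. unfold Rdiv. rewrite Rabs_mult, Rabs_inv, (Rabs_right a) by lra.
apply Rmult_lt_reg_r with a; [lra|]. rewrite Rmult_assoc, Rinv_l, Rmult_1_r by lra. lra.
Qed.

Section DirectionalDerivative.
Context {nx nz : nat} (F : vec nx -> vec nz -> R).

Lemma is_dirderiv_unique x z d l1 l2 :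
  is_dirderiv F x z d l1 -> is_dirderiv F x z d l2 -> l1 = l2.
Proof.
intros H1 H2. apply NNPP; intro Hne.
assert (He : 0 < Rabs (l1 - l2) / 2) by (apply Rdiv_lt_0_compat; [apply Rabs_pos_lt|]; lra).
destruct (H1 _ He) as [d1 [Hd1 K1]]. destruct (H2 _ He) as [d2 [Hd2 K2]].
pose proof (Rmin_l d1 d2); pose proof (Rmin_r d1 d2); pose proof (Rmin_pos d1 d2 Hd1 Hd2).
set (a := Rmin d1 d2 / 2).
specialize (K1 a ltac:(unfold a; lra)); specialize (K2 a ltac:(unfold a; lra)).
set (q := (F (vadd x (vscal a d)) z - F x z) / a) in *.
pose proof (Rabs_triang (q - l2) (- (q - l1))) as Htri. rewrite Rabs_Ropp in Htri.
replace (q - l2 + - (q - l1)) with (l1 - l2) in Htri by ring. lra.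
Qed.

Lemma dirderiv_le_of_quotient_le x z d l q T : 0 < T -> is_dirderiv F x z d l ->
  (forall a, 0 < a <= T -> (F (vadd x (vscal a d)) z - F x z) / a <= q) -> l <= q.
Proof.
intros HT Hl Hq. apply Rnot_lt_le; intro Hlt.
destruct (Hl (l - q)) as [delta [Hdelta H]]; [lra|].
pose proof (Rmin_l delta T); pose proof (Rmin_r delta T); pose proof (Rmin_pos delta T Hdelta HT).
set (a := Rmin delta T / 2).
specialize (H a ltac:(unfold a; lra)); specialize (Hq a ltac:(unfold a; lra)).
pose proof (Rle_abs (l - (F (vadd x (vscal a d)) z - F x z) / a)).
rewrite Rabs_minus_sym in H. lra.
Qed.

(* With y := x + t d: backward quotients of F at y are bounded by the secant slope to x. *)
Lemma convex_backward_quotient_le x z d t a : convex_fun F -> 0 < a <= t ->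
  (F (vadd (vadd x (vscal t d)) (vscal a (vscal (-1) d))) z - F (vadd x (vscal t d)) z) / a
  <= (F x z - F (vadd x (vscal t d)) z) / t.
Proof.
intros Hconv Ha. set (y := vadd x (vscal t d)). set (s := a / t).
assert (Hs : 0 <= s <= 1).
{ unfold s; split; [apply Rlt_le, Rdiv_lt_0_compat; lra|].
  apply Rmult_le_reg_r with t; [lra|]. field_simplify; lra. }
pose proof (Hconv x z y z s Hs) as C.
replace (vadd (vscal s x) (vscal (1 - s) y)) with (vadd y (vscal a (vscal (-1) d))) in C
  by (unfold y, s; apply functional_extensionality; intro i; unfold vadd, vscal; field; lra).
replace (vadd (vscal s z) (vscal (1 - s) z)) with z in C by vext.
apply Rmult_le_reg_r with a; [lra|].
replace ((F (vadd y (vscal a (vscal (-1) d))) z - F y z) / a * a)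
  with (F (vadd y (vscal a (vscal (-1) d))) z - F y z) by (field; lra).
replace ((F x z - F y z) / t * a) with (s * (F x z - F y z)) by (unfold s; field; lra).
lra.
Qed.

Lemma armijo_step_pos beta sigma x z d a :
  0 < beta -> armijo_step F beta sigma x z d a -> 0 < a.
Proof. intros Hb [m [-> _]]. now apply pow_lt. Qed.

End DirectionalDerivative.
Section ContinuouslyDifferentiable.
Context {nx nz : nat} (F : vec nx -> vec nz -> R)
  (gx : vec nx -> vec nz -> vec nx) (gz : vec nx -> vec nz -> vec nz).

Hypothesis F_frechet : forall x z eps, 0 < eps -> exists delta, 0 < delta /\
  forall hx hz, pnorm hx hz < delta ->
    Rabs (F (vadd x hx) (vadd z hz) - F x z - vdot (gx x z) hx - vdot (gz x z) hz)
      <= eps * pnorm hx hz.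

Lemma F_locally_lipschitz x z : exists delta K, 0 < delta /\ 0 <= K /\
  forall hx hz, pnorm hx hz < delta -> Rabs (F (vadd x hx) (vadd z hz) - F x z) <= K * pnorm hx hz.
Proof.
destruct (F_frechet x z 1 Rlt_0_1) as [delta [Hdelta H]].
pose proof (vnorm_nonneg (gx x z)); pose proof (vnorm_nonneg (gz x z)).
exists delta, (vnorm (gx x z) + vnorm (gz x z) + 1). repeat split; [lra|lra|].
intros hx hz Hh. specialize (H hx hz Hh).
set (r := F (vadd x hx) (vadd z hz) - F x z - vdot (gx x z) hx - vdot (gz x z) hz) in H.
pose proof (vdot_abs_le (gx x z) hx); pose proof (vdot_abs_le (gz x z) hz).
pose proof (pnorm_ge_l hx hz); pose proof (pnorm_ge_r hx hz).
replace (F (vadd x hx) (vadd z hz) - F x z) with (r + vdot (gx x z) hx + vdot (gz x z) hz)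
  by (unfold r; ring).
pose proof (Rabs_triang (r + vdot (gx x z) hx) (vdot (gz x z) hz)).
pose proof (Rabs_triang r (vdot (gx x z) hx)).
nra.
Qed.

Lemma F_continuous x z eps : 0 < eps -> exists delta, 0 < delta /\ forall x' z',
  vnorm (vsub x' x) < delta -> vnorm (vsub z' z) < delta -> Rabs (F x' z' - F x z) < eps.
Proof.
intros Heps. destruct (F_locally_lipschitz x z) as [dl [K [Hdl [HK H]]]].
set (delta := Rmin (dl / 2) (eps / (2 * (K + 1)))).
assert (Hdelta : 0 < delta) by (apply Rmin_pos; [|apply Rdiv_lt_0_compat]; lra).
assert (Hdelta1 : delta <= dl / 2) by apply Rmin_l.
assert (Hdelta2 : delta <= eps / (2 * (K + 1))) by apply Rmin_r.
exists delta; split; [exact Hdelta|]. intros x' z' Hx Hz.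
replace x' with (vadd x (vsub x' x)) by vext. replace z' with (vadd z (vsub z' z)) by vext.
pose proof (pnorm_le_add (vsub x' x) (vsub z' z)).
eapply Rle_lt_trans; [apply H; lra|].
assert (Hp : pnorm (vsub x' x) (vsub z' z) < 2 * delta) by lra.
replace eps with ((K + 1) * (2 * (eps / (2 * (K + 1))))) by (field; lra).
pose proof (sqrt_pos (vdot (vsub x' x) (vsub x' x) + vdot (vsub z' z) (vsub z' z))).
unfold pnorm in *. nra.
Qed.

Lemma F_seq_continuous (x : nat -> vec nx) (z : nat -> vec nz) xb zb :
  vconverges x xb -> vconverges z zb -> Un_cv (fun j => F (x j) (z j)) (F xb zb).
Proof.
intros Hx Hz eps Heps. destruct (F_continuous xb zb eps Heps) as [delta [Hdelta H]].
destruct (Hx delta Hdelta) as [N1 HN1]; destruct (Hz delta Hdelta) as [N2 HN2].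
exists (Nat.max N1 N2); intros j Hj. apply H; [apply HN1|apply HN2]; lia.
Qed.

Lemma grad_is_dirderiv x z d : is_dirderiv F x z d (vdot (gx x z) d).
Proof.
intros eps Heps. set (N := vnorm d + 1). pose proof (vnorm_nonneg d) as Hd0.
set (e := eps / N). assert (He : e * N = eps) by (unfold e; field; unfold N; lra).
destruct (F_frechet x z e) as [dl [Hdl H]]; [unfold e, N; apply Rdiv_lt_0_compat; lra|].
exists (dl / N); split; [apply Rdiv_lt_0_compat; unfold N; lra|].
intros a [Ha Hadl]. specialize (H (vscal a d) (fun _ => 0)).
assert (HaN : a * N < dl).
{ apply Rmult_lt_compat_r with (r := N) in Hadl; [|unfold N; lra].
  replace (dl / N * N) with dl in Hadl by (field; unfold N; lra). lra. }
assert (Hp : pnorm (vscal a d) (fun _ : Fin.t nz => 0) <= a * vnorm d).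
{ eapply Rle_trans; [apply pnorm_le_add|]. rewrite vnorm_zero, vnorm_scal, Rabs_right; lra. }
replace (vadd z (fun _ => 0)) with z in H by vext.
rewrite vdot_zero, vdot_scalr, Rminus_0_r in H.
replace ((F (vadd x (vscal a d)) z - F x z) / a - vdot (gx x z) d)
  with ((F (vadd x (vscal a d)) z - F x z - a * vdot (gx x z) d) / a) by (field; lra).
apply Rabs_div_lt; [lra|].
assert (Hd : a * vnorm d < a * N) by (apply Rmult_lt_compat_l; unfold N; lra).
assert (He0 : 0 < e) by (unfold e, N; apply Rdiv_lt_0_compat; lra).
eapply Rle_lt_trans; [apply H; unfold N in *; nra|]. nra.
Qed.

Lemma dirderiv_eq_grad x z d : dirderiv F x z d = vdot (gx x z) d.
Proof.
apply (is_dirderiv_unique F x z d); [|apply grad_is_dirderiv].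
unfold dirderiv. apply epsilon_spec. exists (vdot (gx x z) d). apply grad_is_dirderiv.
Qed.

Section Convex.
Hypothesis F_convex : convex_fun F.

Lemma convex_secant_le_grad x z d t : 0 < t ->
  F (vadd x (vscal t d)) z - F x z <= t * vdot (gx (vadd x (vscal t d)) z) d.
Proof.
intros Ht. set (y := vadd x (vscal t d)).
pose proof (dirderiv_le_of_quotient_le F y z (vscal (-1) d) _ _ t Ht
  (grad_is_dirderiv y z (vscal (-1) d))
  (fun a Ha => convex_backward_quotient_le F x z d t a F_convex Ha)) as H.
rewrite vdot_scalr in H. fold y in H.
apply Rmult_le_compat_l with (r := t) in H; [|lra].
replace (t * ((F x z - F y z) / t)) with (F x z - F y z) in H by (field; lra). lra.
Qed.

(* The Armijo test failed at the previous trial step [a / beta]. *)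
Lemma armijo_backtrack_slope beta sigma x z d a :
  0 < beta -> armijo_step F beta sigma x z d a -> a < 1 ->
  sigma * vdot (gx x z) d < vdot (gx (vadd x (vscal (a / beta) d)) z) d.
Proof.
intros Hb [[|m] [Ha [_ Hfail]]] Ha1; [simpl in Ha; lra|].
specialize (Hfail m (Nat.lt_succ_diag_r m)). unfold armijo_cond in Hfail.
rewrite dirderiv_eq_grad in Hfail. apply Rnot_le_lt in Hfail.
replace (a / beta) with (beta ^ m) by (rewrite Ha; simpl; field; lra).
assert (Ht : 0 < beta ^ m) by (apply pow_lt; lra).
pose proof (convex_secant_le_grad x z d (beta ^ m) Ht).
apply Rmult_lt_reg_l with (beta ^ m); lra.
Qed.

(* xb is the midpoint of x1 and its reflection 2 xb - x1. *)
Lemma convex_midpoint_reflection xb x1 z1 w :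
  F xb (vadd (vscal (1 / 2) z1) (vscal (1 - 1 / 2) w))
  <= 1 / 2 * F x1 z1 + (1 - 1 / 2) * F (vsub (vscal 2 xb) x1) w.
Proof.
replace xb with (vadd (vscal (1 / 2) x1) (vscal (1 - 1 / 2) (vsub (vscal 2 xb) x1))) at 1 by vext.
apply F_convex; lra.
Qed.

Lemma limit_point_of_bounded_values (X : vec nx -> Prop) (Z : vec nz -> Prop) x z M :
  is_compact X -> is_convex_set Z -> (forall xx, X xx -> inf_compact (F xx) Z) ->
  (forall k, X (x k)) -> (forall k, Z (z k)) -> (forall k, F (x k) (z k) <= M) ->
  exists xb zb, is_limit_point x z xb zb.
Proof.
intros HX HZ Hinf Hx Hz HM.
destruct (compact_subseq_converges X x 0 HX (fun j _ => Hx j)) as [xb [phi [HXb [Hphi Hxc]]]].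
set (w := z 0%nat).
set (v := fun j => vadd (vscal (1 / 2) (z (phi j))) (vscal (1 - 1 / 2) w)).
assert (Href : Un_cv (fun j => F (vsub (vscal 2 xb) (x (phi j))) w) (F xb w)).
{ apply F_seq_continuous; [|intros e He; exists 0%nat; intros; rewrite vnorm_subxx; lra].
  pose proof (vconverges_affine _ _ (-1) (vscal 2 xb) Hxc) as H.
  replace (vadd (vscal (-1) xb) (vscal 2 xb)) with xb in H by vext.
  replace (fun j => vsub (vscal 2 xb) (x (phi j)))
    with (fun j => vadd (vscal (-1) (x (phi j))) (vscal 2 xb))
    by (apply functional_extensionality; intro; vext).
  exact H. }
destruct (Href 1 Rlt_0_1) as [N HN].
set (l := 1 / 2 * M + 1 / 2 * (F xb w + 1)).
assert (Hsub : forall j, (N <= j)%nat -> Z (v j) /\ F xb (v j) <= l).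
{ intros j Hj. split; [apply HZ; [apply Hz|apply Hz|lra]|].
  specialize (HN j Hj). unfold Rdist in HN.
  pose proof (Rle_abs (F (vsub (vscal 2 xb) (x (phi j))) w - F xb w)).
  pose proof (convex_midpoint_reflection xb (x (phi j)) (z (phi j)) w).
  pose proof (HM (phi j)). unfold v, l. lra. }
destruct (compact_subseq_converges _ v N (Hinf xb HXb l) Hsub) as [vb [psi [_ [Hpsi Hvc]]]].
exists xb, (vadd (vscal 2 vb) (vscal (-1) w)), (fun j => phi (psi j)).
split; [now apply strict_incr_comp|]. apply pconverges_iff; split.
- now apply (vconverges_subseq (fun j => x (phi j))).
- replace (fun j => z (phi (psi j))) with (fun j => vadd (vscal 2 (v (psi j))) (vscal (-1) w))
    by (apply functional_extensionality; intro; unfold v; vext).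
  now apply vconverges_affine.
Qed.

Section GradientContinuous.
Hypothesis grad_continuous : forall x z eps, 0 < eps -> exists delta, 0 < delta /\
  forall x' z', pnorm (vsub x' x) (vsub z' z) < delta ->
    vnorm (vsub (gx x' z') (gx x z)) < eps /\ vnorm (vsub (gz x' z') (gz x z)) < eps.

Lemma grad_dot_increment_small xb zb B eta : 0 <= B -> 0 < eta ->
  exists delta, 0 < delta /\ forall x' y z' d,
    vnorm (vsub x' xb) < delta -> vnorm (vsub y xb) < delta -> vnorm (vsub z' zb) < delta ->
    vnorm d <= B -> vdot (gx y z') d - vdot (gx x' z') d <= eta.
Proof.
intros HB Heta. set (e := eta / (2 * (B + 1))).
assert (He : e * (2 * (B + 1)) = eta) by (unfold e; field; lra).
destruct (grad_continuous xb zb e) as [dl [Hdl Hg]]; [unfold e; apply Rdiv_lt_0_compat; lra|].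
exists (dl / 2); split; [lra|]. intros x' y z' d Hx Hy Hz Hd.
assert (Hclose : forall u, vnorm (vsub u xb) < dl / 2 -> vnorm (vsub (gx u z') (gx xb zb)) < e).
{ intros u Hu. apply Hg. pose proof (pnorm_le_add (vsub u xb) (vsub z' zb)). lra. }
pose proof (Hclose _ Hy); pose proof (Hclose _ Hx).
pose proof (vnorm_sub_triang (gx y z') (gx xb zb) (gx x' z')).
rewrite (vnorm_sub_sym (gx xb zb)) in H1.
rewrite <- vdot_subl. eapply Rle_trans; [apply vdot_le|].
pose proof (vnorm_nonneg (vsub (gx y z') (gx x' z'))); pose proof (vnorm_nonneg d).
assert (0 < e) by nra. nra.
Qed.

Lemma vanishing_armijo_steps_absurd (x : nat -> vec nx) (z : nat -> vec nz) (d : nat -> vec nx)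
  (alpha : nat -> R) phi beta sigma xb zb B c :
  0 < beta < 1 -> 0 < sigma < 1 -> 0 <= B -> c < 0 ->
  (forall k, armijo_step F beta sigma (x k) (z k) (d k) (alpha k)) ->
  (forall k, vnorm (d k) <= B) ->
  vconverges (fun j => x (phi j)) xb -> vconverges (fun j => z (phi j)) zb ->
  Un_cv (fun j => alpha (phi j)) 0 ->
  (exists N, forall j, (N <= j)%nat -> vdot (gx (x (phi j)) (z (phi j))) (d (phi j)) <= c) ->
  False.
Proof.
intros Hb Hs HB Hc Harm Hdb Hxc Hzc Hac [N1 HN1].
destruct (grad_dot_increment_small xb zb B ((1 - sigma) * - c) HB) as [dl [Hdl Hg]]; [nra|].
set (q := dl / (2 * (B + 1))).
assert (Hq : q * (2 * (B + 1)) = dl) by (unfold q; field; lra).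
destruct (Hxc (dl / 2)) as [N2 HN2]; [lra|].
destruct (Hzc dl Hdl) as [N3 HN3].
destruct (Hac (Rmin 1 (beta * q))) as [N4 HN4].
{ apply Rmin_pos; [lra|]. apply Rmult_lt_0_compat; [lra|]. unfold q; apply Rdiv_lt_0_compat; lra. }
set (j := Nat.max (Nat.max N1 N2) (Nat.max N3 N4)).
specialize (HN1 j ltac:(lia)); specialize (HN2 j ltac:(lia));
specialize (HN3 j ltac:(lia)); specialize (HN4 j ltac:(lia)).
set (k := phi j) in *. unfold Rdist in HN4. rewrite Rminus_0_r in HN4.
pose proof (Rmin_l 1 (beta * q)); pose proof (Rmin_r 1 (beta * q)).
pose proof (armijo_step_pos F beta sigma _ _ _ _ (proj1 Hb) (Harm k)) as Hapos.
rewrite Rabs_right in HN4 by lra.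
set (t := alpha k / beta).
assert (Ht : 0 < t < q).
{ unfold t; split; [apply Rdiv_lt_0_compat; lra|].
  apply Rmult_lt_reg_l with beta; [lra|]. field_simplify; lra. }
pose proof (armijo_backtrack_slope beta sigma _ _ _ _ (proj1 Hb) (Harm k)
  ltac:(lra)) as Hslope. fold t in Hslope.
assert (Hy : vnorm (vsub (vadd (x k) (vscal t (d k))) xb) < dl).
{ replace (vsub (vadd (x k) (vscal t (d k))) xb) with (vadd (vsub (x k) xb) (vscal t (d k)))
    by vext.
  eapply Rle_lt_trans; [apply vnorm_add|]. rewrite vnorm_scal, Rabs_right by lra.
  pose proof (Hdb k). pose proof (vnorm_nonneg (d k)). nra. }
specialize (Hg (x k) (vadd (x k) (vscal t (d k))) (z k) (d k) ltac:(lra) Hy HN3 (Hdb k)).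
assert (0 <= (1 - sigma) * (c - vdot (gx (x k) (z k)) (d k))) by (apply Rmult_le_pos; lra).
nra.
Qed.

End GradientContinuous.
End Convex.
End ContinuouslyDifferentiable.

Theorem lemma6 (nx nz : nat) (F : vec nx -> vec nz -> R)
  (X : vec nx -> Prop) (Z : vec nz -> Prop) (beta sigma : R)
  (x : nat -> vec nx) (z : nat -> vec nz) (d : nat -> vec nx) (alpha : nat -> R) :
  convex_fun F -> cont_diff F ->
  is_convex_set X -> is_compact X ->
  is_closed Z -> is_convex_set Z ->
  (forall xx, X xx -> inf_compact (F xx) Z) ->
  0 < beta < 1 -> 0 < sigma < 1 ->
  (forall k, X (x k)) -> (forall k, Z (z k)) ->
  (forall k, armijo_step F beta sigma (x k) (z k) (d k) (alpha k)) ->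
  DA F X x z d -> GRA F X x z d -> SDA F x z d alpha ->
  (exists xb zb, is_limit_point x z xb zb) /\
  (forall xb zb, is_limit_point x z xb zb ->
     forall db, X (vadd xb db) -> dirderiv F xb zb db >= 0).
Proof.
intros Hconv [gx [gz [Hd Hgrad]]] _ HXk _ HZc Hinf Hb Hs HX HZ Harm HDA HGRA HSDA.
set (f := fun k => F (x k) (z k)).
assert (Hapos : forall k, 0 < alpha k)
  by (intro k; exact (armijo_step_pos F beta sigma _ _ _ _ (proj1 Hb) (Harm k))).
assert (Hstep : forall k, f (S k) <= f k + alpha k * sigma * dirderiv F (x k) (z k) (d k)).
{ intro k. destruct (Harm k) as [m [_ [Hcond _]]]. unfold armijo_cond in Hcond.
  pose proof (HSDA k). unfold f. lra. }
assert (Hdec : Un_decreasing f).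
{ intro k. pose proof (Hstep k). pose proof (proj2 (HDA k)).
  pose proof (Rmult_lt_0_compat _ _ (Hapos k) (proj1 Hs)). nra. }
split.
- apply (limit_point_of_bounded_values F gx gz Hd Hconv X Z x z (f 0%nat) HXk HZc Hinf HX HZ).
  intro k. apply (decreasing_prop f 0 k Hdec). lia.
- intros xb zb [phi [Hphi Hlim]] db HXdb. apply Rnot_lt_ge; intro Hneg.
  destruct (HGRA phi xb zb Hphi Hlim (ex_intro _ db (conj HXdb Hneg))) as [c [Hc0 HN]].
  apply pconverges_iff in Hlim as [Hxc Hzc].
  assert (Halpha : Un_cv (fun j => alpha (phi j)) 0).
  { apply (armijo_steps_vanish f alpha (fun k => dirderiv F (x k) (z k) (d k)) sigma c phi
      (F xb zb) (proj1 Hs) Hc0 Hphi Hapos Hdec Hstep HN).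
    exact (F_seq_continuous F gx gz Hd _ _ xb zb Hxc Hzc). }
  destruct (direction_bounded X x d HXk HX (fun k => proj1 (HDA k))) as [B [HB Hdb]].
  cbv beta in HN. setoid_rewrite (dirderiv_eq_grad F gx gz Hd) in HN.
  exact (vanishing_armijo_steps_absurd F gx gz Hd Hconv Hgrad x z d alpha phi beta sigma xb zb B c
    Hb Hs HB Hc0 Harm Hdb Hxc Hzc Halpha HN).
Qed.
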